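(* Let $A$ be a commutative unital ring of characteristic $0$, $n\ge4$, $k\in\{3,\ldots,n-1\}$ and $(b_1,\ldots,b_k)\in A^k$. Let $s=(1_A,n_A-2_A,1_A,2_A,\ldots,2_A)\in A^n$ (last $n-3$ entries equal to $2_A$). Suppose $(b_1,\ldots,b_k)$ can be used to reduce $s$, i.e. $(b_1,\ldots,b_k)$ is a $\lambda$-quiddity over $A$ and there exists $(c_1,\ldots,c_{n+2-k})\in A^{n+2-k}$ with $s\sim(c_1,\ldots,c_{n+2-k})\oplus(b_1,\ldots,b_k)$. Then there exist $x,y\in A$ such that $(b_1,\ldots,b_k)=(x,1_A,2_A,\ldots,2_A,y)$ or $(b_1,\ldots,b_k)=(x,2_A,\ldots,2_A,1_A,y)$ (the number of entries equal to $2_A$ being $k-3$, possibly zero).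
   Context: $k_A=k\cdot1_A$ for an integer $k$. For $a_1,\ldots,a_n\in A$, $M_n(a_1,\ldots,a_n)=\begin{pmatrix}a_n&-1\\1&0\end{pmatrix}\cdots\begin{pmatrix}a_1&-1\\1&0\end{pmatrix}$. An $n$-tuple $(a_1,\ldots,a_n)\in A^n$ is a $\lambda$-quiddity over $A$ if $M_n(a_1,\ldots,a_n)=\pm\mathrm{Id}$. For $(a_1,\ldots,a_n)\in A^n$, $(b_1,\ldots,b_m)\in A^m$, define $(a_1,\ldots,a_n)\oplus(b_1,\ldots,b_m)=(a_1+b_m,a_2,\ldots,a_{n-1},a_n+b_1,b_2,\ldots,b_{m-1})$. Write $(a_1,\ldots,a_n)\sim(b_1,\ldots,b_n)$ if $(b_1,\ldots,b_n)$ is obtained from $(a_1,\ldots,a_n)$ or from $(a_n,\ldots,a_1)$ by a cyclic permutation. *)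

From HB Require Import structures.
From mathcomp Require Import all_boot all_order all_algebra.
Set Implicit Arguments. Unset Strict Implicit. Unset Printing Implicit Defensive.
Import GRing.Theory.
Local Open Scope ring_scope.

Definition char0 (A : comNzRingType) : Prop :=
  forall m : nat, (m%:R : A) = 0 -> m = 0%N.

Definition Mstep (A : comNzRingType) (a : A) : 'M[A]_2 :=
  \matrix_(i < 2, j < 2)
    (if (i : nat) == 0%N then (if (j : nat) == 0%N then a else -1)
     else (if (j : nat) == 0%N then 1 else 0)).

(* M_n(a_1,...,a_n) = M(a_n) ... M(a_1). *)
Definition Mn (A : comNzRingType) (s : seq A) : 'M[A]_2 :=
  foldl (fun M a => Mstep a *m M) 1%:M s.

Definition lambda_quiddity (A : comNzRingType) (s : seq A) : Prop :=
  Mn s = 1%:M \/ Mn s = - 1%:M.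

(* (a_1,...,a_n) (+) (b_1,...,b_m)
   = (a_1 + b_m, a_2, ..., a_{n-1}, a_n + b_1, b_2, ..., b_{m-1}). *)
Definition oplus (A : comNzRingType) (a b : seq A) : seq A :=
  (head 0 a + last 0 b) :: take (size a - 2) (behead a)
  ++ (last 0 a + head 0 b) :: take (size b - 2) (behead b).

Definition quid_equiv (A : comNzRingType) (a b : seq A) : Prop :=
  size a = size b /\ exists i : nat, b = rot i a \/ b = rot i (rev a).

From mathcomp Require Import all_boot all_order all_algebra.
From mathcomp Require Import ring zify.
Set Implicit Arguments. Unset Strict Implicit. Unset Printing Implicit Defensive.
Import GRing.Theory.
Local Open Scope ring_scope.

(* Write b = (b_1, w, b_k).  The (2,2) entry of M_k(b) is -K(w), K the continuant,
   so K(w) = +-1.  Since the reverse of s is a rotation of s, s ~ c (+) b makes w a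
   cyclic factor of s of length k - 2 <= n - 3.  The continuant of such a factor of
   s = (1, n-2, 1, 2, ..., 2) is a natural number >= 2 (hence not +-1 in
   characteristic 0) unless the factor is (2, ..., 2, 1) or (1, 2, ..., 2). *)

Section Continuants.
Variable A : comNzRingType.

Definition cont_step (p : A * A) (a : A) : A * A := (a * p.1 - p.2, p.1).

(* [continuants l = (K(l), K(l without its last entry))], K the continuant. *)
Definition continuants (l : seq A) : A * A := foldl cont_step (1, 0) l.

Definition continuant (l : seq A) : A := (continuants l).1.

Definition is_pm1 (x : A) : Prop := x = 1 \/ x = -1.

Lemma Mn_rcons (l : seq A) (a : A) : Mn (rcons l a) = Mstep a *m Mn l.
Proof. by rewrite /Mn foldl_rcons. Qed.

Lemma Mn_cons (a : A) (l : seq A) : Mn (a :: l) = Mn l *m Mstep a.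
Proof.
elim/last_ind: l => [|l x IHl]; first by rewrite /Mn /= mul1mx mulmx1.
by rewrite -rcons_cons !Mn_rcons IHl mulmxA.
Qed.

Lemma Mn_col0 (l : seq A) :
  Mn l 0 0 = continuant l /\ Mn l 1 0 = (continuants l).2.
Proof.
rewrite /continuant.
elim/last_ind: l => [|l a [IH0 IH1]]; first by rewrite /Mn /continuants /= !mxE.
rewrite Mn_rcons /continuants foldl_rcons -/(continuants l) /cont_step /=.
rewrite !mxE !big_ord_recl big_ord0 /= !mxE /= IH0.
rewrite (_ : lift ord0 ord0 = 1 :> 'I_2); last exact: val_inj.
by rewrite IH1 !big_ord0; split; ring.
Qed.

Lemma Mn_cons_rcons11 (x y : A) (w : seq A) :
  Mn (x :: rcons w y) 1 1 = - continuant w.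
Proof.
have [<- _] := Mn_col0 w.
rewrite Mn_cons Mn_rcons !mxE !big_ord_recl big_ord0 /= !mxE /=.
rewrite !big_ord_recl !big_ord0 /= !mxE /=.
ring.
Qed.

Lemma lambda_quiddity_continuant (x y : A) (w : seq A) :
  lambda_quiddity (x :: rcons w y) -> is_pm1 (continuant w).
Proof.
move=> [] /(congr1 (fun M : 'M[A]_2 => M 1 1)); rewrite Mn_cons_rcons11 !mxE /=.
- by move=> /eqP; rewrite eqr_oppLR => /eqP; right.
- by move=> /oppr_inj; left.
Qed.

Lemma foldl_cont_step_nseq2 (u v : A) (q : nat) :
  foldl cont_step (u, v) (nseq q 2) = (u + q%:R * (u - v), v + q%:R * (u - v)).
Proof.
elim: q u v => [|q IH] u v /=; first by rewrite !mul0r !addr0.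
by rewrite IH /cont_step /=; congr (_, _); ring.
Qed.

Lemma char0_natr_pm1 (hA : char0 A) (m : nat) : is_pm1 (m%:R) -> (m <= 1)%N.
Proof.
case: (leqP m 1) => // m_gt1 [] h.
- have : ((m - 1)%:R : A) = 0 by rewrite natrB; [rewrite h subrr | lia].
  by move/hA; lia.
- have : ((m + 1)%:R : A) = 0 by rewrite natrD h addNr.
  by move/hA; lia.
Qed.

End Continuants.

Lemma drop_oplus (A : comNzRingType) (c b : seq A) : (1 < size c)%N ->
  drop (size c) (oplus c b) = take (size b - 2) (behead b).
Proof.
case: c => [|c1 c] //= c_gt0.
rewrite /oplus /= drop_cat size_takel; last by lia.
rewrite ifN; last by lia.
have -> : (size c - ((size c).+1 - 2) = 1)%N by lia.
by rewrite /= drop0.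
Qed.

Lemma rot_rev_eq_rot (T : Type) (s : seq T) (r i : nat) :
  rev s = rot r s -> (r <= size s)%N -> exists j, rot i (rev s) = rot j s.
Proof.
move=> -> r_le; rewrite rot_minn size_rot rot_add_mod ?geq_minr //.
by eexists.
Qed.

Lemma rot_take_drop_cat (T : Type) (t : seq T) (j : nat) : (j <= size t)%N ->
  rot j t = take (size t) (drop j (t ++ t)).
Proof.
move=> j_le; rewrite -{3}(cat_take_drop j t) -catA drop_size_cat ?size_takel //.
rewrite take_cat size_drop ltnNge leq_subr /=.
by rewrite (_ : size t - (size t - j) = j)%N; last lia.
Qed.

Lemma drop_rot_window (T : Type) (t : seq T) (j m : nat) : (0 < size t)%N ->
  exists2 p, (p < size t)%N & drop m (rot j t) = take (size t - m) (drop p (t ++ t)).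
Proof.
move=> t_gt0; have [n_le_m | m_lt_n] := leqP (size t) m.
  by exists 0%N; rewrite // drop_oversize ?size_rot // (_ : size t - m = 0)%N ?take0 //; lia.
rewrite rot_minn rot_take_drop_cat ?geq_minr //.
move: (minn j _) (geq_minr j (size t)) => {}j j_le.
have -> : drop m (take (size t) (drop j (t ++ t)))
    = take (size t - m) (drop (m + j) (t ++ t)).
  by rewrite -drop_drop [RHS]take_drop subnK // ltnW.
have [win_lt | win_ge] := ltnP (m + j) (size t); first by exists (m + j)%N.
exists (m + j - size t)%N; first by lia.
rewrite drop_cat ltnNge win_ge /= drop_cat ifT; last by lia.
by rewrite takel_cat // size_drop; lia.
Qed.

Section FactorsOfS.
Variables (A : comNzRingType) (hA : char0 A).

(* The sequence [s] of the theorem for [n = q + 3]. *)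
Definition quid_s (q : nat) : seq A := [:: 1, q.+1%:R, 1 & nseq q 2].

Lemma size_quid_s (q : nat) : size (quid_s q) = (q + 3)%N.
Proof. by rewrite /= size_nseq addn3. Qed.

Lemma rev_quid_s (q : nat) : rev (quid_s q) = rot 3 (quid_s q).
Proof. by rewrite /quid_s /rot /= !rev_cons rev_nseq -!cats1 -!catA drop0 take0. Qed.

Lemma continuant_nseq2_cat (a : nat) (w : seq A) :
  continuant (nseq a 2 ++ w) = (foldl (@cont_step A) (a.+1%:R, a%:R) w).1.
Proof.
rewrite /continuant /continuants foldl_cat foldl_cont_step_nseq2.
by congr (foldl _ (_, _) _).1; ring.
Qed.

Lemma pm1_window_quid_s_from_twos (a q L : nat) (Z : seq A) : (0 < L <= q)%N ->
  is_pm1 (continuant (take L (nseq a 2 ++ quid_s q ++ Z))) ->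
  take L (nseq a 2 ++ quid_s q ++ Z) = rcons (nseq L.-1 2) 1.
Proof.
move=> /andP[L_gt0 L_le_q].
have [L_le_a | a_lt_L] := leqP L a.
  rewrite takel_cat ?size_nseq // take_nseq //.
  suff -> : continuant (nseq L 2) = L.+1%:R :> A by move/(char0_natr_pm1 hA); lia.
  by rewrite -[nseq L 2]cats0 continuant_nseq2_cat.
have [r EL] : exists r, L = (a + r.+1)%N by exists (L - a).-1; lia.
subst L; clear L_gt0.
rewrite take_cat size_nseq ltnNge leq_addr /= addKn.
case: r a_lt_L L_le_q => [|[|t]] a_lt_L L_le_q /=.
- by rewrite cats1 addn1.
- have [m ->] : exists m, q = (a + m.+2)%N by exists (q - a - 2)%N; lia.
  suff -> : continuant (nseq a 2 ++ [:: 1; (a + m.+2).+1%:R]) = m.+2%:R :> A.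
    by move/(char0_natr_pm1 hA); lia.
  by rewrite continuant_nseq2_cat /= /cont_step /=; ring.
- have [m ->] : exists m, q = (a + t + m.+3)%N by exists (q - a - t - 3)%N; lia.
  rewrite takel_cat ?size_nseq ?take_nseq; try lia.
  suff -> : continuant (nseq a 2 ++ [:: 1, (a + t + m.+3).+1%:R, 1 & nseq t 2])
      = m.+2%:R :> A by move/(char0_natr_pm1 hA); lia.
  rewrite continuant_nseq2_cat /= /cont_step /= foldl_cont_step_nseq2 /=.
  ring.
Qed.

Lemma not_pm1_window_quid_s_at1 (q L : nat) (Z : seq A) : (0 < L <= q)%N ->
  ~ is_pm1 (continuant (take L (behead (quid_s q) ++ Z))).
Proof.
move=> /andP[L_gt0 L_le_q].
case: L L_gt0 L_le_q => [|[|t]] // _ L_le_q /=.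
- rewrite /continuant /continuants /= /cont_step /= mulr1 subr0.
  by move/(char0_natr_pm1 hA); lia.
- have [m ->] : exists m, q = (t + m.+2)%N by exists (q - t - 2)%N; lia.
  rewrite takel_cat ?size_nseq ?take_nseq; try lia.
  suff -> : continuant [:: (t + m.+2).+1%:R, 1 & nseq t 2] = m.+2%:R :> A.
    by move/(char0_natr_pm1 hA); lia.
  rewrite /continuant /continuants /= /cont_step /= foldl_cont_step_nseq2 /=.
  ring.
Qed.

Lemma pm1_window_quid_s (q L p : nat) (w : seq A) :
  (0 < L <= q)%N -> (p < q + 3)%N ->
  w = take L (drop p (quid_s q ++ quid_s q)) -> is_pm1 (continuant w) ->
  w = rcons (nseq L.-1 2) 1 \/ w = 1 :: nseq L.-1 2.
Proof.
move=> L_range p_lt ->.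
(* The factor starts at the first 1, at n - 2, at the second 1, or among the 2's. *)
case: p p_lt => [|[|[|t]]] p_lt Hw.
- by left; apply: (pm1_window_quid_s_from_twos (a := 0) L_range).
- by case: (not_pm1_window_quid_s_at1 L_range Hw).
- right; case: L L_range {Hw} => [|L] //= L_lt_q.
  by rewrite takel_cat ?size_nseq ?take_nseq //; lia.
- have E : drop t.+3 (quid_s q ++ quid_s q) = nseq (q - t) 2 ++ quid_s q ++ [::].
    by rewrite cats0 /= drop_cat size_nseq ifT ?drop_nseq //; lia.
  by rewrite E in Hw *; left; exact: pm1_window_quid_s_from_twos.
Qed.

End FactorsOfS.

Theorem lemma4p8 (A : comNzRingType) (hA : char0 A) (n k : nat)
  (hn : (4 <= n)%N) (hk1 : (3 <= k)%N) (hk2 : (k <= n - 1)%N)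
  (b : seq A) (hb : size b = k) :
  let s : seq A := 1 :: (n%:R - 2) :: 1 :: nseq (n - 3) 2 in
  lambda_quiddity b ->
  (exists c : seq A, size c = (n + 2 - k)%N /\ quid_equiv s (oplus c b)) ->
  exists x y : A,
    b = x :: 1 :: rcons (nseq (k - 3) 2) y \/
    b = x :: nseq (k - 3) 2 ++ [:: 1; y].
Proof.
move=> s hq [c [size_c [_ [i equiv_i]]]].
have Es : s = quid_s A (n - 3).
  by rewrite /s /quid_s (_ : (n - 3).+1 = n - 2)%N ?natrB //; lia.
rewrite {}Es {s} in equiv_i.
have size_s : size (quid_s A (n - 3)) = n by rewrite size_quid_s; lia.
case: b hb hq equiv_i => [|b1 b'] hb; first by move: hb => /=; lia.
case/lastP: b' hb => [|W bk] hb hq equiv_i; first by move: hb => /=; lia.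
have [j rot_j] : exists j, oplus c (b1 :: rcons W bk) = rot j (quid_s A (n - 3)).
  case: equiv_i => ->; first by exists i.
  by apply: rot_rev_eq_rot; rewrite ?rev_quid_s // size_quid_s; lia.
have W_drop : W = drop (size c) (rot j (quid_s A (n - 3))).
  rewrite -rot_j drop_oplus ?size_c; last by lia.
  by rewrite /= size_rcons !subSS subn0 -cats1 take_size_cat.
have [|p p_lt W_win] := drop_rot_window j (size c) (t := quid_s A (n - 3)); first lia.
rewrite size_s in p_lt; rewrite size_s size_c in W_win W_drop.
rewrite (_ : (n - (n + 2 - k)) = k - 2)%N in W_win; last by lia.
have L_range : (0 < k - 2 <= n - 3)%N by lia.
have p_lt' : (p < n - 3 + 3)%N by lia.
have := pm1_window_quid_s hA L_range p_lt' (etrans W_drop W_win).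
case=> [|->|->]; first exact: lambda_quiddity_continuant hq.
all: exists b1, bk; rewrite (_ : (k - 2).-1 = k - 3)%N; last lia.
- by right; rewrite -!cats1 -catA.
- by left.
Qed.
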